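(* Let $n,m\ge 1$ and let $u_1,\ldots,u_r$ be left normed commutators $u_j=[t_1,t_2,t_{j_3},\ldots,t_{j_k}]$ ($j_s\in\{1,2\}$) with $\deg_{t_1}u_j=n$ and $\deg_{t_2}u_j=m$ for all $j$. Let $\alpha_1,\ldots,\alpha_r\in K[X]$ and suppose $f(C_1,C_2)=\sum_j\alpha_ju_j(C_1,C_2)\in F$. Then the following are equivalent: (1) $f(C_1,C_2)$ is strongly central in $F$; (2) $f(C_1,C_2)$ is central in $F$; (3) $\alpha_1+\cdots+\alpha_r=0$ in $K[X;Y]$.
   Context: $K$ is an infinite field of characteristic different from 2. Let $X=\{x_1,x_2,x_1',x_2'\}$ and $Y=\{y_1,y_2,y_1',y_2'\}$, and let $K[X;Y]\cong K[X]\otimes_K E(Y)$ be the free supercommutative algebra: the $x$'s are even commuting variables, the $y$'s are odd pairwise anticommuting variables, and $E(Y)$ is the Grassmann algebra on the vector space with basis $Y$; $K[X]$ is the polynomial subalgebra, whose elements act on matrices as scalars. Put $C_1=\begin{pmatrix} x_1&y_1\\ y_1'&x_1'\end{pmatrix}$, $C_2=\begin{pmatrix} x_2&y_2\\ y_2'&x_2'\end{pmatrix}$, and let $F=K[C_1,C_2]$ be the unital $K$-subalgebra of $M_2(K[X;Y])$ generated by $C_1,C_2$. Commutators are $[a,b]=ab-ba$, left normed: $[a_1,\ldots,a_k]=[[a_1,\ldots,a_{k-1}],a_k]$; $t_1,t_2$ are free noncommuting variables. An element $a\in F$ is strongly central if $a$ is central in $F$ and $ab$ is central in $F$ for every $b\in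 F$. *)

From HB Require Import structures.
From mathcomp Require Import all_boot all_order all_algebra.
From mathcomp Require Import mpoly.
Set Implicit Arguments. Unset Strict Implicit. Unset Printing Implicit Defensive.
Import GRing.Theory.
Local Open Scope ring_scope.

(* K[X] = K[x1, x2, x1', x2'] with x1 = 'X_0, x2 = 'X_1, x1' = 'X_2, x2' = 'X_3. *)
Notation KX K := {mpoly K[4]}.

(* The free supercommutative algebra K[X;Y] = K[X] (x) E(Y) is realised
   faithfully inside the matrix ring A = M_16(K[X]) acting on the 16-dimensional
   K[X]-module E(Y) (basis e_T, T subset of {0,1,2,3}, encoded by the bits of an
   index j < 16) by LEFT multiplication: ygen k is left multiplication by the
   odd generator number k, i.e.  y_k e_T = (-1)^#{t in T | t < k} e_{T u {k}}
   if k \notin T, and 0 otherwise. *)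
Definition SA (K : fieldType) := 'M[KX K]_16.

Definition xgen (K : fieldType) (k : 'I_4) : SA K := ('X_k : KX K)%:M.

Definition ygen (K : fieldType) (k : nat) : SA K :=
  \matrix_(i < 16, j < 16)
    (if ~~ odd (j %/ 2 ^ k) && (i == j + 2 ^ k :> nat)
     then (-1) ^+ (\sum_(l < k) odd (j %/ 2 ^ l))
     else 0).

Definition scalX (K : fieldType) (a : KX K) : 'M[SA K]_2 := ((a%:M : SA K))%:M.
Definition scalK (K : fieldType) (c : K) : 'M[SA K]_2 := scalX (c%:MP).

Definition mx2 (K : fieldType) (a b c d : SA K) : 'M[SA K]_2 :=
  \matrix_(i < 2, j < 2)
    (if i == 0 :> nat then (if j == 0 :> nat then a else b)
     else (if j == 0 :> nat then c else d)).

(* C1 = [[x1, y1], [y1', x1']],  C2 = [[x2, y2], [y2', x2']] with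
   y1 = ygen 0, y2 = ygen 1, y1' = ygen 2, y2' = ygen 3. *)
Definition C1 (K : fieldType) : 'M[SA K]_2 :=
  mx2 (xgen K 0) (ygen K 0) (ygen K 2) (xgen K 2).
Definition C2 (K : fieldType) : 'M[SA K]_2 :=
  mx2 (xgen K 1) (ygen K 1) (ygen K 3) (xgen K 3).

Inductive inF (K : fieldType) : 'M[SA K]_2 -> Prop :=
  | inF_scal (c : K) : inF (scalK c)
  | inF_C1 : inF (C1 K)
  | inF_C2 : inF (C2 K)
  | inF_add a b : inF a -> inF b -> inF (a + b)
  | inF_mul a b : inF a -> inF b -> inF (a * b).

Definition central_in_F (K : fieldType) (a : 'M[SA K]_2) : Prop :=
  forall b, inF b -> a * b = b * a.

Definition strongly_central_in_F (K : fieldType) (a : 'M[SA K]_2) : Prop :=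
  central_in_F a /\ forall b, inF b -> central_in_F (a * b).

Definition comm (R : pzRingType) (a b : R) : R := a * b - b * a.

(* A left normed commutator [t1, t2, t_{j3}, ..., t_{jk}] is encoded by the
   sequence s = [j3; ...; jk] of booleans (false = t1, true = t2);
   its value at (a1, a2) is: *)
Definition lncomm (R : pzRingType) (a1 a2 : R) (s : seq bool) : R :=
  foldl (fun acc (b : bool) => comm acc (if b then a2 else a1)) (comm a1 a2) s.

Definition deg_t1 (s : seq bool) : nat := (count negb s).+1.
Definition deg_t2 (s : seq bool) : nat := (count id s).+1.

From HB Require Import structures.
From mathcomp Require Import all_boot all_order all_algebra.
From mathcomp Require Import mpoly ring.
Import GRing.Theory.
Local Open Scope ring_scope.

(* Write 2 x 2 matrices over K[X;Y] as blocks [mx2 a b c d] and put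
   a1 = x1 - x1', a2 = x2 - x2'.  Then [C1, C2] = mx2 w q r w with
   w = y1 y2' - y2 y1', q = a1 y2 - a2 y1 and r = a2 y1' - a1 y2', and every
   further bracket with C1 (resp. C2) keeps the shape mx2 d q r d, multiplying
   the off-diagonal entries by a1 (resp. a2) up to sign.  Hence a commutator u
   of degrees (n, m) is mx2 D_u (+-A q) (A r) D_u with A = a1^(n-1) a2^(m-1),
   and f = mx2 D (+-A s q) (A s r) D where s = sum_j alpha_j.  If f commutes
   with C1, the lower left entry of the bracket gives a1 A s r = 0, so s = 0.
   Conversely a1 a2 D_u depends on u only through A and its last letter, and
   the two possible values differ by a multiple of q r.  So if s = 0 then
   a1 a2 D is a multiple of q r, which annihilates q, r and w by the Grassmann
   relations.  A diagonal matrix mx2 D 0 0 D with D even commutes with F; when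
   it also annihilates [C1, C2] it annihilates every [b, C1], [b, C2] with b in
   F, and then its products with elements of F are central as well. *)

(** * Elements anticommuting with four odd generators *)

Section OddGenerators.
Context {R : comNzRingType} {A : algType R} (y : nat -> A).
Hypothesis y_anticomm : forall i j, (i < 4)%N -> (j < 4)%N -> y i * y j = - (y j * y i).
Hypothesis y_sqr : forall i, (i < 4)%N -> y i * y i = 0.

Definition odd_elem (q : A) := forall k, (k < 4)%N -> q * y k = - (y k * q).
Definition even_elem (d : A) := forall k, (k < 4)%N -> GRing.comm d (y k).

Lemma odd_elem_y {i} : (i < 4)%N -> odd_elem (y i).
Proof. by move=> hi k hk; rewrite y_anticomm. Qed.

Lemma odd_elemB q q' : odd_elem q -> odd_elem q' -> odd_elem (q - q').
Proof. by move=> h h' k hk; rewrite mulrBl mulrBr h // h' // -opprD. Qed.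

Lemma odd_elemZ c q : odd_elem q -> odd_elem (c *: q).
Proof. by move=> h k hk; rewrite -scalerAl h // scalerN scalerAr. Qed.

Lemma odd_elem_mulC {q k} : odd_elem q -> (k < 4)%N -> y k * q = - (q * y k).
Proof. by move=> h hk; rewrite h ?opprK. Qed.

Lemma even_elemD d d' : even_elem d -> even_elem d' -> even_elem (d + d').
Proof. by move=> h h' k hk; rewrite /GRing.comm mulrDl mulrDr h // h'. Qed.

Lemma even_elemN d : even_elem d -> even_elem (- d).
Proof. by move=> h k hk; rewrite /GRing.comm mulNr mulrN h. Qed.

Lemma even_elemZ c d : even_elem d -> even_elem (c *: d).
Proof. by move=> h k hk; rewrite /GRing.comm -scalerAl h // scalerAr. Qed.

Lemma even_elem_sum (I : Type) (s : seq I) (P : pred I) (F : I -> A) :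
  (forall i, P i -> even_elem (F i)) -> even_elem (\sum_(i <- s | P i) F i).
Proof.
move=> hF; apply: (big_ind even_elem) => //; last exact: even_elemD.
by move=> k _; rewrite /GRing.comm mul0r mulr0.
Qed.

Lemma even_elem_mul {q q'} : odd_elem q -> odd_elem q' -> even_elem (q * q').
Proof.
by move=> h h' k hk; rewrite /GRing.comm -mulrA h' // mulrN (mulrA q) h // mulNr opprK mulrA.
Qed.

Lemma y_mul_pair_eq0 j k l : (k < 4)%N -> (l < 4)%N -> (j == k) || (j == l) ->
  y j * (y k * y l) = 0.
Proof.
move=> hk hl /orP[]/eqP->; first by rewrite mulrA y_sqr // mul0r.
by rewrite y_anticomm // mulrN mulrA y_sqr // mul0r oppr0.
Qed.

Lemma pair_mul_pair_eq0 i j k l : [&& i < 4, j < 4, k < 4 & l < 4]%N ->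
  (i \in [:: k; l]) || (j \in [:: k; l]) -> (y i * y j) * (y k * y l) = 0.
Proof.
case/and4P=> hi hj hk hl; rewrite !inE => /orP[hikl|hjkl].
  have klE : GRing.comm (y k * y l) (y j).
    exact: even_elem_mul (odd_elem_y hk) (odd_elem_y hl) j hj.
  by rewrite -mulrA -klE mulrA y_mul_pair_eq0 // mul0r.
by rewrite -mulrA y_mul_pair_eq0 // mulr0.
Qed.

Variables a1 a2 : R.

Definition w12 : A := y 0 * y 3 - y 1 * y 2.
Definition q12 : A := a1 *: y 1 - a2 *: y 0.
Definition r12 : A := a2 *: y 2 - a1 *: y 3.

Lemma w12_even : even_elem w12.
Proof.
by apply: even_elemD; [|apply: even_elemN]; apply: even_elem_mul; apply: odd_elem_y.
Qed.

Lemma q12_odd : odd_elem q12.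
Proof. by apply: odd_elemB; apply: odd_elemZ; apply: odd_elem_y. Qed.

Lemma r12_odd : odd_elem r12.
Proof. by apply: odd_elemB; apply: odd_elemZ; apply: odd_elem_y. Qed.

Lemma lincomb_sqr_eq0 (b c : R) (u v : A) : u * u = 0 -> v * v = 0 -> v * u = - (u * v) ->
  (b *: u - c *: v) * (b *: u - c *: v) = 0.
Proof.
move=> uu vv vu; rewrite mulrBl !mulrBr -!scalerAl -!scalerAr !scalerA uu vv vu.
by rewrite !scaler0 scalerN mulrC subr0 sub0r opprK addNr.
Qed.

Lemma q12_sqr : q12 * q12 = 0.
Proof. by apply: lincomb_sqr_eq0; [exact: y_sqr..|exact: y_anticomm]. Qed.

Lemma r12_sqr : r12 * r12 = 0.
Proof. by apply: lincomb_sqr_eq0; [exact: y_sqr..|exact: y_anticomm]. Qed.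

Lemma r12_q12_anticomm : r12 * q12 = - (q12 * r12).
Proof.
rewrite {1}/r12 mulrBl -!scalerAl !(odd_elem_mulC q12_odd) // !scalerN.
by rewrite -opprD !scalerAr -mulrBr.
Qed.

Lemma q12_r12_w12 : q12 * r12 * w12 = 0.
Proof.
have P := pair_mul_pair_eq0.
have y12_even : even_elem (y 1 * y 2) by apply: even_elem_mul; apply: odd_elem_y.
rewrite /w12 mulrBr; apply/eqP; rewrite subr_eq0; apply/eqP.
rewrite /q12 /r12 mulrBl !mulrBr -!scalerAl -!scalerAr !scalerA !mulrBl -!scalerAl.
rewrite (P 1 3 0 3) // (P 0 2 0 3) // (P 0 3 0 3) // (P 1 2 1 2) // (P 1 3 1 2) //.
rewrite (P 0 2 1 2) // !(scaler0, subr0, sub0r, opprK, addr0) mulrC; congr (_ *: _).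
by rewrite (mulrA (y 1 * y 2)) y12_even // -mulrA y12_even // mulrA.
Qed.

Lemma q12_r12_q12 : q12 * r12 * q12 = 0.
Proof. by rewrite -mulrA r12_q12_anticomm mulrN mulrA q12_sqr mul0r oppr0. Qed.

Lemma q12_r12_r12 : q12 * r12 * r12 = 0.
Proof. by rewrite -mulrA r12_sqr mulr0. Qed.

End OddGenerators.

(** * The odd generators as 16 x 16 matrices *)

Definition bit (k x : nat) : bool := odd (x %/ 2 ^ k).

Fixpoint bits_below (k x : nat) : nat :=
  if k is k'.+1 then (bits_below k' x + bit k' x)%N else 0%N.

Lemma sum_bits_below k x : (\sum_(l < k) bit l x)%N = bits_below k x.
Proof. by elim: k => [|k IHk]; rewrite ?big_ord0 // big_ord_recr /= IHk. Qed.

Definition yy_support (i j a b : nat) : bool :=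
  [&& ~~ bit j b, ~~ bit i ((b + 2 ^ j) %% 16) & a == ((b + 2 ^ j) %% 16 + 2 ^ i) %% 16]%N.
Definition yy_sign (i j b : nat) : nat := (bits_below i ((b + 2 ^ j) %% 16) + bits_below j b)%N.

Lemma yy_table : all (fun i => all (fun j => all (fun a => all (fun b =>
  [&& yy_support i j a b == yy_support j i a b,
      yy_support i j a b ==> odd (yy_sign i j b + yy_sign j i b)
    & ~~ yy_support i i a b]) (iota 0 16)) (iota 0 16)) (iota 0 4)) (iota 0 4).
Proof. by vm_compute. Qed.

Lemma yy_tableP (i j a b : nat) : (i < 4)%N -> (j < 4)%N -> (a < 16)%N -> (b < 16)%N ->
  [&& yy_support i j a b == yy_support j i a b,
      yy_support i j a b ==> odd (yy_sign i j b + yy_sign j i b)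
    & ~~ yy_support i i a b].
Proof.
move=> hi hj ha hb.
have mem k n : (k < n)%N -> k \in iota 0 n by rewrite mem_iota.
exact: (allP (allP (allP (allP yy_table i (mem _ _ hi)) j (mem _ _ hj))
                     a (mem _ _ ha)) b (mem _ _ hb)).
Qed.

Section GrassmannGenerators.
Variable K : fieldType.

Lemma ygen_entry k (a b : 'I_16) : (k < 4)%N -> ygen K k a b =
  if ~~ bit k b && (a == (b + 2 ^ k) %% 16 :> nat)%N then (-1) ^+ bits_below k b else 0.
Proof.
by case: k => [|[|[|[|k]]]] // _; rewrite /ygen mxE -sum_bits_below; case: b.
Qed.

Lemma ygen_mul_entry i j (a b : 'I_16) : (i < 4)%N -> (j < 4)%N ->
  (ygen K i * ygen K j) a b = if yy_support i j a b then (-1) ^+ yy_sign i j b else 0.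
Proof.
move=> hi hj; rewrite -mulmxE mxE.
have hc : ((b + 2 ^ j) %% 16 < 16)%N by rewrite ltn_pmod.
rewrite (bigD1 (Ordinal hc)) //= big1 => [|c /negbTE nc]; last first.
  rewrite (ygen_entry _ _ _ hj); case: ifP => [/andP[_ /eqP ec]|_]; last by rewrite mulr0.
  by move: nc; rewrite -val_eqE /= ec eqxx.
rewrite addr0 (ygen_entry _ _ _ hi) (ygen_entry _ _ _ hj) eqxx andbT /yy_support /yy_sign /=.
case: (bit j b); rewrite ?andbF ?mulr0 //=.
by case: ifP; rewrite ?mul0r // -exprD addnC.
Qed.

Lemma ygen_anticomm i j : (i < 4)%N -> (j < 4)%N ->
  ygen K i * ygen K j = - (ygen K j * ygen K i).
Proof.
move=> hi hj; apply/matrixP => a b; rewrite [RHS]mxE !ygen_mul_entry //.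
case/and3P: (yy_tableP i j a b hi hj (ltn_ord a) (ltn_ord b)) => /eqP <- + _.
case: ifP => _ /=; rewrite ?oppr0 // => /negPn.
by rewrite -signr_odd oddD -[in RHS]signr_odd; case: odd; case: odd; rewrite ?opprK.
Qed.

Lemma ygen_sqr i : (i < 4)%N -> ygen K i * ygen K i = 0.
Proof.
move=> hi; apply/matrixP => a b; rewrite [RHS]mxE ygen_mul_entry //.
by case/and3P: (yy_tableP i i a b hi hi (ltn_ord a) (ltn_ord b)) => _ _ /negbTE ->.
Qed.

End GrassmannGenerators.

(* Prevents unification from unfolding the 16 x 16 matrices [ygen K k]. *)
Opaque ygen.

Section BlockMatrices.
Variable K : fieldType.
Implicit Types (a b c d : SA K) (M : 'M[SA K]_2).

Lemma scalar_mulmx (x : KX K) (M : SA K) : x%:M * M = x *: M.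
Proof. by rewrite -mulmxE mul_scalar_mx. Qed.

Lemma mulmx_scalar (x : KX K) (M : SA K) : M * x%:M = x *: M.
Proof. by rewrite -mulmxE mul_mx_scalar. Qed.

Lemma scalar_comm (p : KX K) (M : SA K) : GRing.comm p%:M M.
Proof. by rewrite /GRing.comm -!mulmxE scalar_mxC. Qed.

Lemma mx2M a b c d (a' b' c' d' : SA K) :
  mx2 a b c d * mx2 a' b' c' d' =
  mx2 (a * a' + b * c') (a * b' + b * d') (c * a' + d * c') (c * b' + d * d').
Proof.
apply/matrixP => i j; rewrite -mulmxE !mxE !big_ord_recl big_ord0 addr0 !mxE /=.
by case: i => [[|[|]]] //= _; case: j => [[|[|]]].
Qed.

Lemma mx2D a b c d (a' b' c' d' : SA K) :
  mx2 a b c d + mx2 a' b' c' d' = mx2 (a + a') (b + b') (c + c') (d + d').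
Proof.
by apply/matrixP => i j; rewrite !mxE; case: i => [[|[|]]] //= _; case: j => [[|[|]]].
Qed.

Lemma mx2N a b c d : - mx2 a b c d = mx2 (- a) (- b) (- c) (- d).
Proof.
by apply/matrixP => i j; rewrite !mxE; case: i => [[|[|]]] //= _; case: j => [[|[|]]].
Qed.

Lemma mx2B a b c d (a' b' c' d' : SA K) :
  mx2 a b c d - mx2 a' b' c' d' = mx2 (a - a') (b - b') (c - c') (d - d').
Proof. by rewrite mx2N mx2D. Qed.

Lemma mx20 : mx2 0 0 0 0 = 0 :> 'M[SA K]_2.
Proof.
by apply/matrixP => i j; rewrite !mxE; case: i => [[|[|]]] //= _; case: j => [[|[|]]].
Qed.

Lemma mx2_eta M : M = mx2 (M 0 0) (M 0 1) (M 1 0) (M 1 1).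
Proof.
apply/matrixP => i j; rewrite !mxE.
by case: i => [[|[|]]] //= hi; case: j => [[|[|]]] //= hj; congr (M _ _); apply: val_inj.
Qed.

Lemma mx2_eq0 a b c d : mx2 a b c d = 0 -> [/\ a = 0, b = 0, c = 0 & d = 0].
Proof.
move=> E; have e i j := congr1 (fun M => M i j) E.
by move: (e 0 0) (e 0 1) (e 1 0) (e 1 1); rewrite !mxE.
Qed.

Lemma mx2_sum (I : Type) (s : seq I) (P : pred I) (a b c d : I -> SA K) :
  \sum_(i <- s | P i) mx2 (a i) (b i) (c i) (d i) =
  mx2 (\sum_(i <- s | P i) a i) (\sum_(i <- s | P i) b i)
      (\sum_(i <- s | P i) c i) (\sum_(i <- s | P i) d i).
Proof.
elim: s => [|i s IHs]; first by rewrite !big_nil mx20.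
by rewrite !big_cons; case: (P i); rewrite // IHs mx2D.
Qed.

Lemma scalX_mx2 (p : KX K) : scalX p = mx2 p%:M 0 0 p%:M.
Proof.
apply/matrixP => i j; rewrite !mxE.
by case: i => [[|[|]]] //= hi; case: j => [[|[|]]] //= hj; rewrite ?mulr1n ?mulr0n.
Qed.

Lemma scalX_mul (p : KX K) a b c d :
  scalX p * mx2 a b c d = mx2 (p *: a) (p *: b) (p *: c) (p *: d).
Proof.
by rewrite scalX_mx2 mx2M !mul0r !addr0 !add0r -!mulmxE !mul_scalar_mx.
Qed.

Lemma scalX_mul_scaled (p b c : KX K) (d q r : SA K) :
  scalX p * mx2 d (b *: q) (c *: r) d = mx2 (p *: d) ((p * b) *: q) ((p * c) *: r) (p *: d).
Proof. by rewrite scalX_mul 2!scalerA. Qed.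

End BlockMatrices.

Section Commutator.
Variable R : pzRingType.
Implicit Types a b c : R.

Lemma comm_self a : comm a a = 0.
Proof. exact: subrr. Qed.

Lemma commC a b : comm b a = - comm a b.
Proof. by rewrite /comm opprB. Qed.

Lemma commDl a b c : comm (a + b) c = comm a c + comm b c.
Proof. by rewrite /comm mulrDl mulrDr opprD addrACA. Qed.

Lemma commMl a b c : comm (a * b) c = a * comm b c + comm a c * b.
Proof. by rewrite /comm mulrBr mulrBl !mulrA addrA subrK. Qed.

Lemma comm_annC Z a b : Z * comm a b = 0 -> Z * comm b a = 0.
Proof. by move=> h; rewrite commC mulrN h oppr0. Qed.

Lemma comm_annD Z a b c : Z * comm a c = 0 -> Z * comm b c = 0 -> Z * comm (a + b) c = 0.
Proof. by move=> ha hb; rewrite commDl mulrDr ha hb addr0. Qed.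

Lemma comm_annM Z a b c :
  GRing.comm Z a -> Z * comm a c = 0 -> Z * comm b c = 0 -> Z * comm (a * b) c = 0.
Proof.
move=> Za ha hb; rewrite commMl mulrDr mulrA Za -mulrA hb mulr0 add0r.
by rewrite mulrA ha mul0r.
Qed.

Lemma comm_ann_commr Z b c : GRing.comm Z c -> Z * comm b c = 0 -> GRing.comm (Z * b) c.
Proof.
move=> Zc h; rewrite /GRing.comm -mulrA -[b * c](subrK (c * b)) mulrDr h add0r.
by rewrite mulrA Zc mulrA.
Qed.

End Commutator.

Lemma scalerAC (R : comPzRingType) (V : lmodType R) (a b : R) (v : V) :
  a *: (b *: v) = b *: (a *: v).
Proof. by rewrite !scalerA mulrC. Qed.

Lemma sum_scale_mul_eq0 {R : comPzRingType} {A : lalgType R} {I : Type} {s : seq I}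
    {alpha : I -> R} {X : I -> A} {x v : A} :
  \sum_(i <- s) alpha i = 0 -> (forall i, X i * v = x * v) ->
  (\sum_(i <- s) alpha i *: X i) * v = 0.
Proof.
move=> hsum hX; rewrite mulr_suml (eq_bigr (fun i => alpha i *: (x * v))) => [|i _].
  by rewrite -scaler_suml hsum scale0r.
by rewrite -scalerAl hX.
Qed.

Lemma subX_neq0 (R : nzRingType) n (i j : 'I_n) : i != j -> ('X_i - 'X_j : {mpoly R[n]}) != 0.
Proof.
move=> ij; apply/eqP => /(congr1 (mcoeff U_(i))).
rewrite mcoeffB !mcoeffXU eqxx mcoeff0 eq_sym (negbTE ij) subr0.
by move/eqP; rewrite oner_eq0.
Qed.

Section Model.
Variable K : fieldType.
Local Notation y := (ygen K).

(** * Centrality in F *)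

Lemma mx2_diag_comm (d a b c e : SA K) :
  GRing.comm d a -> GRing.comm d b -> GRing.comm d c -> GRing.comm d e ->
  GRing.comm (mx2 d 0 0 d) (mx2 a b c e).
Proof.
move=> da db dc de; rewrite /GRing.comm !mx2M; congr mx2.
- by rewrite mul0r mulr0 2!addr0.
- by rewrite mul0r mulr0 addr0 add0r.
- by rewrite mul0r mulr0 addr0 add0r.
- by rewrite mul0r mulr0 2!add0r.
Qed.

Lemma scalK_central (c : K) (M : 'M[SA K]_2) : scalK c * M = M * scalK c.
Proof.
by rewrite /scalK scalX_mx2 [M]mx2_eta; apply: mx2_diag_comm; apply: scalar_comm.
Qed.

Lemma diag_central {d : SA K} : even_elem y d -> central_in_F (mx2 d 0 0 d).
Proof.
move=> hd x; elim=> {x} [c||||].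
- exact/esym/scalK_central.
- by apply: mx2_diag_comm; [apply/esym/scalar_comm | exact: hd..| apply/esym/scalar_comm].
- by apply: mx2_diag_comm; [apply/esym/scalar_comm | exact: hd..| apply/esym/scalar_comm].
- by move=> a b _ ha _ hb; apply: commrD.
- by move=> a b _ ha _ hb; apply: commrM.
Qed.

Lemma central_ann_comm {Z : 'M[SA K]_2} :
  central_in_F Z -> Z * comm (C1 K) (C2 K) = 0 ->
  forall b, inF b -> Z * comm b (C1 K) = 0 /\ Z * comm b (C2 K) = 0.
Proof.
move=> hZ hZc b; elim=> {b} [c||| a b _ [ha1 ha2] _ [hb1 hb2] | a b ia [ha1 ha2] _ [hb1 hb2]].
- by split; rewrite /comm (scalK_central c) subrr mulr0.
- by split; [rewrite comm_self mulr0 | exact: hZc].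
- by split; [apply: comm_annC | rewrite comm_self mulr0].
- by split; [exact: comm_annD ha1 hb1 | exact: comm_annD ha2 hb2].
- by split; [exact: comm_annM (hZ _ ia) ha1 hb1 | exact: comm_annM (hZ _ ia) ha2 hb2].
Qed.

Lemma central_ann_comm_strong {Z : 'M[SA K]_2} :
  central_in_F Z -> Z * comm (C1 K) (C2 K) = 0 -> strongly_central_in_F Z.
Proof.
move=> hZ hZc; split=> // b hb.
have [hb1 hb2] := central_ann_comm hZ hZc _ hb.
move=> x; elim=> {x} [c||| a c _ ha _ hc | a c _ ha _ hc].
- exact/esym/scalK_central.
- exact: comm_ann_commr (hZ _ (inF_C1 K)) hb1.
- exact: comm_ann_commr (hZ _ (inF_C2 K)) hb2.
- exact: commrD.
- exact: commrM.
Qed.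

(** * Left normed commutators in C1, C2 *)

Lemma comm_mx2_odd (d q r : SA K) (x x' : KX K) i i' :
  even_elem y d -> odd_elem y q -> odd_elem y r -> (i < 4)%N -> (i' < 4)%N ->
  comm (mx2 d q r d) (mx2 x%:M (y i) (y i') x'%:M) =
  mx2 (- (y i * r + y i' * q)) (- ((x - x') *: q)) ((x - x') *: r)
      (- (y i * r + y i' * q)).
Proof.
move=> hd hq hr hi hi'; rewrite /comm !mx2M mx2B !scalar_mulmx !mulmx_scalar.
congr mx2.
- by rewrite hq // !opprD addrACA subrr add0r addrC.
- by rewrite hd // [x *: q + _]addrC opprD addrACA subrr add0r scalerBl opprB.
- by rewrite hd // addrKA scalerBl.
- by rewrite hr // [y i' * q + _]addrC addrKA opprD.
Qed.

Definition a1 : KX K := 'X_0 - 'X_2.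
Definition a2 : KX K := 'X_1 - 'X_3.

Lemma a1_neq0 : a1 != 0. Proof. exact: subX_neq0. Qed.

Lemma a2_neq0 : a2 != 0. Proof. exact: subX_neq0. Qed.

Lemma comm_C1_C2 : comm (C1 K) (C2 K) = mx2 (w12 y) (q12 y a1 a2) (r12 y a1 a2) (w12 y).
Proof.
have swap (a b c d : SA K) : a + b - (c + d) = a - d - (c - b).
  by rewrite opprB addrACA -opprD [d + c]addrC.
rewrite /comm /C1 /C2 !mx2M mx2B /xgen !scalar_mulmx !mulmx_scalar /w12 /q12 /r12.
rewrite !scale_scalar_mx /a1 /a2 !scalerBl [('X_0 * _)]mulrC [('X_3 * _)]mulrC.
congr mx2; [|exact: swap|exact: swap|].
  by rewrite opprD addrACA subrr add0r.
rewrite [y 3 * y 0 + _]addrC addrKA.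
by rewrite (ygen_anticomm K 2 1 isT isT) (ygen_anticomm K 3 0 isT isT) opprK addrC.
Qed.

Local Notation wK := (w12 (ygen K)).
Local Notation qK := (q12 (ygen K) a1 a2).
Local Notation rK := (r12 (ygen K) a1 a2).
Let ygen_odd i : (i < 4)%N -> odd_elem y (y i) := odd_elem_y _ (ygen_anticomm K).
Let w12K_even : even_elem y wK := w12_even _ (ygen_anticomm K).
Let q12K_odd : odd_elem y qK := q12_odd _ (ygen_anticomm K) a1 a2.
Let r12K_odd : odd_elem y rK := r12_odd _ (ygen_anticomm K) a1 a2.

Definition xdiff (b : bool) : KX K := if b then a2 else a1.

Lemma comm_letter (d q r : SA K) (b : bool) :
  even_elem y d -> odd_elem y q -> odd_elem y r ->
  comm (mx2 d q r d) (if b then C2 K else C1 K) =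
  mx2 (- (y b * r + y b.+2 * q)) (- (xdiff b *: q)) (xdiff b *: r)
      (- (y b * r + y b.+2 * q)).
Proof. by move=> hd hq hr; case: b; apply: comm_mx2_odd. Qed.

Definition weight (s : seq bool) : KX K := a1 ^+ count negb s * a2 ^+ count id s.

Lemma weight_rcons s b : weight (rcons s b) = weight s * xdiff b.
Proof.
rewrite /weight -cats1 !count_cat.
by case: b; rewrite /= ?addn0 ?addn1 exprSr ?mulrA // mulrAC.
Qed.

Definition lndiag (s : seq bool) : SA K :=
  if s is b0 :: s' then
    let p := belast b0 s' in let b := last b0 s' in
    - (weight p *: (y b * rK + (-1) ^+ size p *: (y b.+2 * qK)))
  else wK.

Lemma lndiag_rcons p b :
  lndiag (rcons p b) = - (weight p *: (y b * rK + (-1) ^+ size p *: (y b.+2 * qK))).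
Proof. by case: p => [|c p]; rewrite /= ?belast_rcons ?last_rcons. Qed.

Lemma lndiag_even s : even_elem y (lndiag s).
Proof.
case/lastP: s => [|p b]; first exact: w12K_even.
have [yb_odd yb2_odd] : odd_elem y (y b) /\ odd_elem y (y b.+2).
  by case: b; split; apply: ygen_odd.
rewrite lndiag_rcons; apply: even_elemN; apply: even_elemZ; apply: even_elemD.
  exact: even_elem_mul yb_odd r12K_odd.
by apply: even_elemZ; exact: even_elem_mul yb2_odd q12K_odd.
Qed.

Lemma lncomm_mx2 s :
  lncomm (C1 K) (C2 K) s =
  mx2 (lndiag s) (((-1) ^+ size s * weight s) *: qK) (weight s *: rK) (lndiag s).
Proof.
elim/last_ind: s => [|s b IHs].
  have weight0 : weight [::] = 1 by rewrite /weight !expr0 mulr1.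
  by rewrite /lncomm /= comm_C1_C2 weight0 expr0 mulr1; congr mx2; rewrite scale1r.
rewrite /lncomm foldl_rcons -/(lncomm _ _ s) IHs comm_letter; first last.
- exact/odd_elemZ/r12K_odd.
- exact/odd_elemZ/q12K_odd.
- exact: lndiag_even.
rewrite lndiag_rcons weight_rcons size_rcons; congr mx2.
- by rewrite -!scalerAr scalerDr scalerA [weight s * _]mulrC.
- by rewrite scalerA -scaleNr exprS; congr (_ *: _); ring.
- by rewrite scalerA [xdiff b * _]mulrC.
- by rewrite -!scalerAr scalerDr scalerA [weight s * _]mulrC.
Qed.

Definition diag_tail (sg : KX K) (b : bool) : SA K :=
  xdiff (~~ b) *: (y b * rK + sg *: (y b.+2 * qK)).

Lemma lndiag_rcons_scaled p b :
  (a1 * a2) *: lndiag (rcons p b) = - (weight (rcons p b) *: diag_tail ((-1) ^+ size p) b).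
Proof.
rewrite lndiag_rcons weight_rcons scalerN /diag_tail 2!scalerA.
by congr (- (_ *: _)); case: b; rewrite /xdiff /=; ring.
Qed.

Lemma diag_tail_sub_ann sg b v :
  qK * rK * v = 0 -> (diag_tail sg b - diag_tail sg true) * v = 0.
Proof.
move=> qrv; case: b; first by rewrite subrr mul0r.
suff -> : diag_tail sg false - diag_tail sg true = - ((1 + sg) *: (qK * rK)).
  by rewrite mulNr -scalerAl qrv scaler0 oppr0.
rewrite /diag_tail /xdiff /= 2!scalerDr opprD addrACA.
have -> : a2 *: (y 0 * rK) - a1 *: (y 1 * rK) = - (qK * rK).
  by rewrite 2!scalerAl -mulrBl -mulNr opprB.
have -> : a2 *: (sg *: (y 2 * qK)) - a1 *: (sg *: (y 3 * qK)) = - (sg *: (qK * rK)).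
  rewrite 2!scalerA [a2 * sg]mulrC [a1 * sg]mulrC -2!scalerA -scalerBr 2!scalerAl -mulrBl.
  rewrite -[a2 *: y 2 - a1 *: y 3]/rK -scalerN; congr (_ *: _).
  exact: r12_q12_anticomm (ygen_anticomm K) a1 a2.
by rewrite scalerDl scale1r opprD.
Qed.

Lemma scale_r12_eq0 (c : KX K) : c *: rK = 0 -> c = 0.
Proof.
have entryZ (a : KX K) (M : SA K) i j : (a *: M) i j = a * M i j by rewrite mxE.
have entryB (M N : SA K) i j : (M - N) i j = M i j - N i j by rewrite !mxE.
move/(congr1 (fun M : SA K => M (inord 4) 0)).
rewrite entryZ entryB 2!entryZ (ygen_entry K 2 _ _ isT) (ygen_entry K 3 _ _ isT) inordK //=.
rewrite [RHS]mxE expr0 mulr1 mulr0 subr0 => /eqP.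
by rewrite mulf_eq0 (negbTE a2_neq0) orbF => /eqP.
Qed.

Lemma central_r12_coef_eq0 {d : SA K} {c c' : KX K} :
  even_elem y d -> central_in_F (mx2 d (c' *: qK) (c *: rK) d) -> c = 0.
Proof.
move=> hd /(_ _ (inF_C1 K)) /eqP; rewrite -subr_eq0 => /eqP h.
have hq : odd_elem y (c' *: qK) by apply/odd_elemZ/q12_odd/ygen_anticomm.
have hr : odd_elem y (c *: rK) by apply/odd_elemZ/r12_odd/ygen_anticomm.
have E : comm (mx2 d (c' *: qK) (c *: rK) d) (C1 K) = _ := comm_letter _ _ _ false hd hq hr.
case/mx2_eq0: (etrans (esym E) h) => _ _ /= + _.
rewrite scalerA => /scale_r12_eq0 /eqP.
by rewrite mulf_eq0 (negbTE a1_neq0) => /eqP.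
Qed.

Lemma diag_strongly_central {d : SA K} {c c' : KX K} :
  even_elem y d -> d * wK = 0 -> d * qK = 0 -> d * rK = 0 -> c = 0 -> c' = 0 ->
  strongly_central_in_F (mx2 d (c *: qK) (c' *: rK) d).
Proof.
move=> hd hw hq hr hc hc'.
have [-> ->] : c *: qK = 0 /\ c' *: rK = 0 by rewrite hc hc'; split; exact: scale0r.
apply: (central_ann_comm_strong (diag_central hd)).
rewrite comm_C1_C2 mx2M -mx20; congr mx2.
- by rewrite hw mul0r addr0.
- by rewrite hq mul0r addr0.
- by rewrite hr mul0r add0r.
- by rewrite hw mul0r add0r.
Qed.

Lemma sum_lncomm_mx2 {r} {u : 'I_r -> seq bool} (alpha : 'I_r -> KX K)
    {k} {w0 : KX K} :
  (forall j, size (u j) = k) -> (forall j, weight (u j) = w0) ->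
  \sum_(j < r) scalX (alpha j) * lncomm (C1 K) (C2 K) (u j) =
  mx2 (\sum_j alpha j *: lndiag (u j)) (((\sum_j alpha j) * ((-1) ^+ k * w0)) *: qK)
      (((\sum_j alpha j) * w0) *: rK) (\sum_j alpha j *: lndiag (u j)).
Proof.
move=> hsize hweight; rewrite (eq_bigr (fun j => mx2 (alpha j *: lndiag (u j))
  ((alpha j * ((-1) ^+ k * w0)) *: qK) ((alpha j * w0) *: rK) (alpha j *: lndiag (u j)))).
  by rewrite mx2_sum; congr mx2; rewrite mulr_suml scaler_suml.
by move=> j _; rewrite lncomm_mx2 scalX_mul_scaled hsize hweight.
Qed.

Lemma lndiag_sum_ann {r} {u : 'I_r -> seq bool} {alpha : 'I_r -> KX K}
    {k} {w0 : KX K} {v : SA K} :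
  (forall j, size (u j) = k) -> (forall j, weight (u j) = w0) ->
  \sum_j alpha j = 0 -> qK * rK * v = 0 ->
  (\sum_j alpha j *: lndiag (u j)) * v = 0.
Proof.
move=> hsize hweight hsum qrv.
case: k hsize => [|k] hsize.
  rewrite (eq_bigr (fun j => alpha j *: wK)) => [|j _]; last by rewrite (size0nil (hsize j)).
  by rewrite -scaler_suml hsum scale0r mul0r.
have dtE j : (a1 * a2) *: lndiag (u j) =
             - (w0 *: diag_tail ((-1) ^+ k) (last true (u j))).
  move: (hsize j) (hweight j); case/lastP: (u j) => [|p b] //.
  by rewrite size_rcons last_rcons => -[<-] <-; exact: lndiag_rcons_scaled.
have dt_ann j : diag_tail ((-1) ^+ k) (last true (u j)) * v =
                diag_tail ((-1) ^+ k) true * v.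
  by apply/eqP; rewrite -subr_eq0 -mulrBl; apply/eqP/diag_tail_sub_ann.
apply: (scalemx_inj (mulf_neq0 a1_neq0 a2_neq0)).
rewrite scaler0 scalerAl scaler_sumr.
rewrite (eq_bigr (fun j => - (w0 *: (alpha j *: diag_tail ((-1) ^+ k) (last true (u j))))))
  => [|j _]; last by rewrite scalerAC dtE scalerN scalerAC.
by rewrite sumrN -scaler_sumr mulNr -scalerAl (sum_scale_mul_eq0 hsum dt_ann) scaler0 oppr0.
Qed.

Lemma central_lncomm_sum_eq0 {r} {u : 'I_r -> seq bool} (alpha : 'I_r -> KX K)
    {k} {w0 : KX K} :
  (forall j, size (u j) = k) -> (forall j, weight (u j) = w0) -> w0 != 0 ->
  central_in_F (\sum_(j < r) scalX (alpha j) * lncomm (C1 K) (C2 K) (u j)) ->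
  \sum_j alpha j = 0.
Proof.
move=> hsize hweight w0_neq0; rewrite (sum_lncomm_mx2 alpha hsize hweight).
have hD : even_elem y (\sum_j alpha j *: lndiag (u j)).
  by apply: even_elem_sum => j _; apply/even_elemZ/lndiag_even.
move/(central_r12_coef_eq0 hD)/eqP.
by rewrite mulf_eq0 (negbTE w0_neq0) orbF => /eqP.
Qed.

Lemma strongly_central_lncomm_sum {r} {u : 'I_r -> seq bool} (alpha : 'I_r -> KX K)
    {k} {w0 : KX K} :
  (forall j, size (u j) = k) -> (forall j, weight (u j) = w0) -> \sum_j alpha j = 0 ->
  strongly_central_in_F (\sum_(j < r) scalX (alpha j) * lncomm (C1 K) (C2 K) (u j)).
Proof.
move=> hsize hweight hsum; rewrite (sum_lncomm_mx2 alpha hsize hweight).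
have hD : even_elem y (\sum_j alpha j *: lndiag (u j)).
  by apply: even_elem_sum => j _; apply/even_elemZ/lndiag_even.
have ann (v : SA K) : qK * rK * v = 0 -> (\sum_j alpha j *: lndiag (u j)) * v = 0.
  exact: lndiag_sum_ann hsize hweight hsum.
apply: (diag_strongly_central hD).
- exact/ann/q12_r12_w12/ygen_sqr/ygen_anticomm.
- exact/ann/q12_r12_q12/ygen_sqr/ygen_anticomm.
- exact/ann/q12_r12_r12/ygen_sqr/ygen_anticomm.
- by rewrite hsum mul0r.
- by rewrite hsum mul0r.
Qed.

End Model.

Theorem proposition3 (K : fieldType)
  (K_infinite : forall s : seq K, exists x : K, x \notin s)
  (K_char : (2%:R : K) != 0)
  (n m : nat) (hn : (1 <= n)%N) (hm : (1 <= m)%N)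
  (r : nat) (u : 'I_r -> seq bool) (alpha : 'I_r -> {mpoly K[4]})
  (hdeg1 : forall j, deg_t1 (u j) = n)
  (hdeg2 : forall j, deg_t2 (u j) = m)
  (hF : inF (\sum_(j < r) scalX (alpha j) * lncomm (C1 K) (C2 K) (u j))) :
  let f := \sum_(j < r) scalX (alpha j) * lncomm (C1 K) (C2 K) (u j) in
  (strongly_central_in_F f <-> central_in_F f) /\
  (central_in_F f <-> \sum_(j < r) alpha j = 0).
Proof.
move=> f.
have count1 j : count negb (u j) = n.-1 by rewrite -(hdeg1 j).
have count2 j : count id (u j) = m.-1 by rewrite -(hdeg2 j).
have hsize j : size (u j) = (n.-1 + m.-1)%N.
  by rewrite -(count1 j) -(count2 j) -(count_predC id) addnC.
have hweight j : weight K (u j) = a1 K ^+ n.-1 * a2 K ^+ m.-1.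
  by rewrite /weight count1 count2.
have w0_neq0 : a1 K ^+ n.-1 * a2 K ^+ m.-1 != 0.
  by rewrite mulf_neq0 // expf_neq0 ?a1_neq0 ?a2_neq0.
have central_sum0 := central_lncomm_sum_eq0 K alpha hsize hweight w0_neq0.
have sum0_strong := strongly_central_lncomm_sum K alpha hsize hweight.
split; split.
- by case.
- by move/central_sum0/sum0_strong.
- exact: central_sum0.
- by case/sum0_strong.
Qed.
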